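(* Let $(\mathcal V,\{C_n\}_n,e)$ be an operator system and let $p\in\mathcal V$ be a nonzero positive contraction ($0\le p\le e$). Then $\alpha_m(p)=1$ if and only if $p\notin J_p$.
   Context: $\alpha_m(x)=\sup\{|\varphi(x)|:\varphi\text{ a state on }\mathcal V\}$ is the minimal order norm. $C(p)=\{x\in\mathcal V: x=x^*,\ \forall\epsilon>0\ \exists t>0\text{ such that } x+\epsilon p+t(e-p)\in C_1\}$ and $J_p=\operatorname{span}(C(p)\cap-C(p))$. *)

From HB Require Import structures.
From mathcomp Require Import all_boot all_order all_algebra.
From mathcomp Require Import complex.
From mathcomp Require Import classical_sets reals.
Set Implicit Arguments. Unset Strict Implicit. Unset Printing Implicit Defensive.
Import Order.TTheory GRing.Theory Num.Theory.
Local Open Scope ring_scope.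
Local Open Scope classical_set_scope.

Section OpSys.
Variable R : realType.
Local Notation C := R[i].
Variable V : lmodType C.

Definition mx_star (star : V -> V) n (A : 'M[V]_n) : 'M[V]_n :=
  \matrix_(i, j) star (A j i).

(* X^* A X for a scalar matrix X : M_{n,m}(C) and A : M_n(V) *)
Definition mx_congr n m (X : 'M[C]_(n, m)) (A : 'M[V]_n) : 'M[V]_m :=
  \matrix_(i, j) \sum_(k < n) \sum_(l < n) ((X k i)^* * X l j) *: A k l.

Definition mx_unit (e : V) n : 'M[V]_n := \matrix_(i, j) (if i == j then e else 0).

Unset Implicit Arguments.
Record opsys := OpSys {
  star : V -> V;
  cones : forall n, set 'M[V]_n;
  unit_e : V;
  star_invol : forall x, star (star x) = x;
  star_semilinear : forall (a : C) x y, star (a *: x + y) = a^* *: star x + star y;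
  cones_herm : forall n A, cones n A -> mx_star star A = A;
  cones_add : forall n A B, cones n A -> cones n B -> cones n (A + B);
  cones_scale : forall n (t : C) A, 0 <= t -> cones n A -> cones n (map_mx (fun v => t *: v) A);
  cones_proper : forall n A, cones n A -> cones n (- A) -> A = 0;
  cones_compat : forall n m (X : 'M[C]_(n, m)) A, cones n A -> cones m (mx_congr X A);
  unit_herm : star unit_e = unit_e;
  unit_order : forall n (A : 'M[V]_n), mx_star star A = A ->
     exists r : C, 0 < r /\ cones n (mx_unit (r *: unit_e) n + A);
  unit_archimedean : forall n (A : 'M[V]_n), mx_star star A = A ->
     (forall r : C, 0 < r -> cones n (mx_unit (r *: unit_e) n + A)) -> cones n A
}.
Set Implicit Arguments.
Arguments cones o n _ : clear implicits.

Variable S : opsys.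

Definition pos (x : V) : Prop := cones S 1 (const_mx x).

Definition state (phi : V -> C) : Prop :=
  (forall (a : C) x y, phi (a *: x + y) = a * phi x + phi y) /\
  (forall x, pos x -> 0 <= phi x) /\
  phi (unit_e S) = 1.

Definition alpha_m (x : V) : R := sup [set complex.Re `|phi x| | phi in state].

Definition Cp (p : V) : set V :=
  [set x | star S x = x /\
     forall eps : C, 0 < eps -> exists t : C, 0 < t /\
        pos (x + eps *: p + t *: (unit_e S - p))].

Definition span (A : set V) : set V :=
  [set x | exists n (a : 'I_n -> C) (v : 'I_n -> V),
     (forall i, A (v i)) /\ x = \sum_(i < n) a i *: v i].

Definition Jp (p : V) : set V := span (Cp p `&` [set x | Cp p (- x)]).

End OpSys.

Arguments star {R V} o _.
Arguments unit_e {R V} o.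
Arguments pos {R V} S x.
Arguments state {R V} S phi.
Arguments alpha_m {R V} S x.
Arguments Cp {R V} S p _.
Arguments span {R V} A _.
Arguments Jp {R V} S p _.

From Pilot Require Import Defs.
From HB Require Import structures.
From mathcomp Require Import all_boot all_order all_algebra.
From mathcomp Require Import complex.
From mathcomp Require Import classical_sets reals boolp.
From mathcomp Require Import ring lra.
Set Implicit Arguments. Unset Strict Implicit. Unset Printing Implicit Defensive.
Import Order.TTheory GRing.Theory Num.Theory.
Local Open Scope classical_set_scope.
Local Open Scope complex_scope.
Local Open Scope ring_scope.

(* If p = sum_i a_i v_i with v_i and -v_i in C(p), applying a state phi to
   v_i + eps p + t (e - p) >= 0 and to its analogue for -v_i bounds |phi v_i| by
   eps + T_i (1 - phi p); hence |phi p| <= eps + T (1 - phi p) for every state,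
   and phi p cannot approach 1.
   If p is not in J_p, then no r e - p with r < 1 is positive (it would put -p
   in C(p)), which says that t e + s p |-> t + s is dominated on span {e, p} by
   x |-> inf {r | Re x <= r e}.  A Hahn-Banach extension (Zorn's lemma on
   dominated graphs) followed by complexification is a state with phi p = 1. *)

Section DominatedExtension.
Variables (R : realType) (V : lmodType R[i]) (D : V -> R -> Prop).

(* [D x r] stands for [q x <= r] with q sublinear; a real-linear functional on
   a subspace is handled through its graph. *)
Definition dominated_linear_graph (G : set (V * R)) :=
  [/\ G (0, 0),
      forall x a y b (t : R), G (x, a) -> G (y, b) -> G (t%:C *: x + y, t * a + b)
    & forall x a r, G (x, a) -> D x r -> a <= r].

Definition adjoin (G : set (V * R)) (v : V) (c : R) : set (V * R) :=
  [set xa | exists w a (s : R), G (w, a) /\ xa = (w + s%:C *: v, a + s * c)].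

Lemma sub_adjoin G v c : G `<=` adjoin G v c.
Proof.
case=> x a Gxa; exists x, a, 0; split=> //.
by rewrite scale0r addr0 mul0r addr0.
Qed.

Lemma adjoin_self G v c : G (0, 0) -> adjoin G v c (v, c).
Proof. by move=> G0; exists 0, 0, 1; rewrite scale1r add0r mul1r add0r. Qed.

Hypothesis DZ : forall (t : R) x r, 0 < t -> D x r -> D (t%:C *: x) (t * r).

Lemma adjoin_dominated_pos G v c w a r (s : R) :
  dominated_linear_graph G -> 0 < s ->
  (forall w a r, G (w, a) -> D (w + v) r -> a + c <= r) ->
  G (w, a) -> D (w + s%:C *: v) r -> a + s * c <= r.
Proof.
move=> [G0 Glin _] s_gt0 Gv Gwa Dr.
have s_neq0 : s != 0 by rewrite gt_eqF.
have sV_gt0 : 0 < s^-1 by rewrite invr_gt0.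
have Gsw : G ((s^-1)%:C *: w, s^-1 * a).
  by have := Glin _ _ _ _ s^-1 Gwa G0; rewrite !addr0.
have Dsw : D ((s^-1)%:C *: w + v) (s^-1 * r).
  by have := DZ sV_gt0 Dr; rewrite scalerDr scalerA -rmorphM mulVf // scale1r.
have := Gv _ _ _ Gsw Dsw.
by rewrite -(ler_pM2l s_gt0) mulrDr !mulrA mulfV // !mul1r.
Qed.

Lemma adjoin_dominated_linear G v c : dominated_linear_graph G ->
  (forall w a r, G (w, a) -> D (w + v) r -> a + c <= r) ->
  (forall w a r, G (w, a) -> D (w - v) r -> a - c <= r) ->
  dominated_linear_graph (adjoin G v c).
Proof.
move=> GD Gv Gnv; have [G0 Glin Gdom] := GD.
split; first exact: sub_adjoin.
  move=> _ _ _ _ t [w1 [a1 [s1 [G1 [-> ->]]]]] [w2 [a2 [s2 [G2 [-> ->]]]]].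
  exists (t%:C *: w1 + w2), (t * a1 + a2), (t * s1 + s2); split; first exact: Glin.
  congr pair; last by ring.
  rewrite rmorphD rmorphM scalerDl -scalerA !scalerDr.
  by rewrite -!addrA; congr (_ + _); rewrite addrCA.
move=> _ _ r [w [a [s [Gwa [-> ->]]]]].
case: (ltgtP s 0) => [s_lt0|s_gt0|->].
- have -> : s%:C *: v = (- s)%:C *: (- v) by rewrite rmorphN scaleNr scalerN opprK.
  have -> : s * c = - s * - c by rewrite mulrNN.
  by apply: (adjoin_dominated_pos GD _ Gnv Gwa); rewrite oppr_gt0.
- exact: (adjoin_dominated_pos GD s_gt0 Gv Gwa).
- by rewrite scale0r addr0 mul0r addr0; exact: Gdom.
Qed.

Hypothesis D0 : D 0 0.
Hypothesis DD : forall x y r s, D x r -> D y s -> D (x + y) (r + s).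
Hypothesis D_bounded : forall x, exists r, D x r.

Lemma dominated_linear_graph_gap G v w a r w' a' r' : dominated_linear_graph G ->
  G (w, a) -> D (w + v) r -> G (w', a') -> D (w' - v) r' -> a' - r' <= r - a.
Proof.
move=> [_ Glin Gdom] Gwa Dr Gwa' Dr'.
have := Gdom _ _ _ (Glin _ _ _ _ 1 Gwa Gwa').
have -> : 1%:C *: w + w' = (w + v) + (w' - v) by rewrite scale1r addrACA subrr addr0.
by rewrite mul1r => /(_ _ (DD Dr Dr')); lra.
Qed.

Definition lower_bounds G v : set R :=
  [set z | exists w a r, [/\ G (w, a), D (w - v) r & z = a - r]].

Lemma adjoin_sup_dominated_linear G v : dominated_linear_graph G ->
  dominated_linear_graph (adjoin G v (sup (lower_bounds G v))).
Proof.
move=> GD; have [G0 _ _] := GD.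
have [r1 Dr1] := D_bounded v.
have [r2 Dr2] := D_bounded (- v).
have Dr1' : D (0 + v) r1 by rewrite add0r.
have lb_ub : ubound (lower_bounds G v) r1.
  move=> _ [w [a [r [Gwa Dr ->]]]].
  by have := dominated_linear_graph_gap GD G0 Dr1' Gwa Dr; rewrite subr0.
apply: adjoin_dominated_linear => // w a r Gwa Dr.
  rewrite addrC -lerBrDr; apply: ge_sup.
    by exists (0 - r2), 0, 0, r2; rewrite add0r.
  move=> _ [w' [a' [r' [Gwa' Dr' ->]]]].
  exact: dominated_linear_graph_gap GD Gwa Dr Gwa' Dr'.
rewrite lerBlDr -lerBlDl; apply: ub_le_sup; first by exists r1.
by exists w, a, r.
Qed.

Lemma dominated_linear_directed_union U : U (0, 0) ->
  (forall z1 z2, U z1 -> U z2 ->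
     exists2 G, dominated_linear_graph G & [/\ G `<=` U, G z1 & G z2]) ->
  dominated_linear_graph U.
Proof.
move=> U0 Udir; split=> // [x a y b t Uxa Uyb|x a r Uxa Dr].
  have [G [_ Glin _] [GU Gxa Gyb]] := Udir _ _ Uxa Uyb.
  exact/GU/Glin.
have [G [_ _ Gdom] [_ Gxa _]] := Udir _ _ Uxa Uxa.
exact: Gdom Gxa Dr.
Qed.

Lemma dominated_linear_graph_total G0 : dominated_linear_graph G0 ->
  exists2 M, dominated_linear_graph M & G0 `<=` M /\ forall v, exists a, M (v, a).
Proof.
move=> G0D; have [G00 _ _] := G0D.
(* Zorn_bigcup also covers the empty chain, hence [G0 `|` H] rather than [H]. *)
pose P := [set H : set (V * R) | dominated_linear_graph (G0 `|` H)].
have [H [PH Hmax]] : exists H, P H /\ forall B, H `<` B -> ~ P B.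
  apply: Zorn_bigcup => F FP Ftot.
  have [->|/set0P[H0 FH0]] := eqVneq F set0; first by rewrite /P /= bigcup_set0 setU0.
  have in_member z : (G0 `|` \bigcup_(X in F) X) z -> exists2 H, F H & (G0 `|` H) z.
    by case=> [G0z|[H FH Hz]]; [exists H0 => //; left | exists H => //; right].
  have sub_union H : F H -> G0 `|` H `<=` G0 `|` \bigcup_(X in F) X.
    by move=> FH; apply: setUS => z Hz; exists H.
  apply: dominated_linear_directed_union; first by left.
  move=> z1 z2 /in_member[H1 FH1 z1H1] /in_member[H2 FH2 z2H2].
  have [H12|H21] := Ftot _ _ FH1 FH2.
  - exists (G0 `|` H2); first exact: FP.
    by split; [exact: sub_union | exact: setUS H12 _ z1H1 |].
  - exists (G0 `|` H1); first exact: FP.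
    by split; [exact: sub_union | | exact: setUS H21 _ z2H2].
exists (G0 `|` H) => //; split=> [z|v]; first by left.
apply: contrapT => /forallNP notMv.
pose c := sup (lower_bounds (G0 `|` H) v).
apply: (Hmax (adjoin (G0 `|` H) v c)); last first.
  rewrite /P /= setUidr; first exact: adjoin_sup_dominated_linear.
  by move=> z G0z; apply: sub_adjoin; left.
split=> [z Hz|adjH]; first by apply: sub_adjoin; right.
by apply: (notMv c); right; apply/adjH/adjoin_self; left.
Qed.

Lemma dominated_linear_graph_functional G x a b : dominated_linear_graph G ->
  G (x, a) -> G (x, b) -> a = b.
Proof.
move=> [_ Glin Gdom] Gxa Gxb.
have le_graph a' b' : G (x, a') -> G (x, b') -> b' <= a'.
  move=> Gxa' Gxb'; have := Gdom _ _ 0 (Glin _ _ _ _ (-1) Gxa' Gxb').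
  by rewrite rmorphN1 scaleN1r addNr => /(_ D0); lra.
by apply/le_anti; rewrite !le_graph.
Qed.

Theorem dominated_extension G : dominated_linear_graph G ->
  exists f : V -> R, [/\ forall x a, G (x, a) -> f x = a,
    forall (t : R) x y, f (t%:C *: x + y) = t * f x + f y
    & forall x r, D x r -> f x <= r].
Proof.
move=> GD; have [M MD [GM Mtot]] := dominated_linear_graph_total GD.
have [_ Mlin Mdom] := MD.
have [f Mf] := choice Mtot.
have fE x a : M (x, a) -> f x = a by exact: dominated_linear_graph_functional MD (Mf x).
exists f; split=> [x a /GM|t x y|x r]; first exact: fE.
  by apply: fE; apply: Mlin.
exact: Mdom (Mf x).
Qed.

End DominatedExtension.

Section Complexification.
Variables (R : realType) (V : lmodType R[i]) (f : V -> R).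
Hypothesis f_lin : forall (t : R) x y, f (t%:C *: x + y) = t * f x + f y.

Definition complexify (x : V) : R[i] := (f x)%:C - 'i * (f ('i *: x))%:C.

Lemma real_linear0 : f 0 = 0.
Proof. by have := f_lin 1 0 0; rewrite scaler0 addr0; lra. Qed.

Lemma real_linearD x y : f (x + y) = f x + f y.
Proof. by have := f_lin 1 x y; rewrite scale1r mul1r. Qed.

Lemma real_linearZ (t : R) x : f (t%:C *: x) = t * f x.
Proof. by have := f_lin t x 0; rewrite !addr0 real_linear0 addr0. Qed.

Lemma real_linearN x : f (- x) = - f x.
Proof. by have := real_linearZ (-1) x; rewrite rmorphN1 scaleN1r mulN1r. Qed.

Let complexifyD x y : complexify (x + y) = complexify x + complexify y.
Proof. by rewrite /complexify scalerDr !real_linearD !rmorphD mulrDr opprD addrACA. Qed.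

Let complexifyZ (t : R) x : complexify (t%:C *: x) = t%:C * complexify x.
Proof.
rewrite /complexify; have -> : 'i *: (t%:C *: x) = t%:C *: ('i *: x).
  by rewrite !scalerA mulrC.
by rewrite !real_linearZ !rmorphM mulrBr mulrCA.
Qed.

Let complexify_i x : complexify ('i *: x) = 'i * complexify x.
Proof.
rewrite /complexify scalerA mulCii scaleN1r.
by rewrite real_linearN rmorphN mulrN opprK mulrBr mulrA mulCii mulN1r addrC opprK.
Qed.

Lemma complexify_linear (a : R[i]) x y :
  complexify (a *: x + y) = a * complexify x + complexify y.
Proof.
have -> : a *: x = (complex.Re a)%:C *: x + (complex.Im a)%:C *: ('i *: x).
  by rewrite scalerA [_ * 'i]mulrC -scalerDl -complexiE -complexE.
rewrite !complexifyD !complexifyZ complexify_i mulrA [_ * 'i]mulrC -mulrDl.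
by rewrite -complexiE -complexE.
Qed.

End Complexification.

Lemma conjC_realc (R : rcfType) (t : R) : (t%:C)^* = t%:C :> R[i].
Proof. exact: conjc_real. Qed.

Lemma ler_norm_sandwich (K : numDomainType) (z k k' : K) :
  0 <= z + k -> 0 <= - z + k' -> 0 <= k -> 0 <= k' -> `|z| <= k + k'.
Proof.
move=> zk_ge0 Nzk'_ge0 k_ge0 k'_ge0.
have z_real : z \is Num.real by rewrite -(addrK k z) rpredB // ger0_real.
rewrite real_ler_norml //; apply/andP; split.
  by rewrite -subr_ge0 opprK (le_trans zk_ge0) // lerD2l lerDl.
by rewrite -subr_ge0 (le_trans Nzk'_ge0) // addrAC lerD2r lerDr.
Qed.

#[local] Arguments cones {R V} o n _.
#[local] Arguments star_invol {R V} o x.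
#[local] Arguments star_semilinear {R V} o a x y.
#[local] Arguments cones_herm {R V o n A}.
#[local] Arguments cones_add {R V o n A B}.
#[local] Arguments cones_scale {R V o n t A}.
#[local] Arguments cones_proper {R V o n A}.
#[local] Arguments unit_herm {R V} o.
#[local] Arguments unit_order {R V o n A}.

Section OperatorSystem.
Variables (R : realType) (V : lmodType R[i]) (S : opsys R V).
Local Notation C := R[i].
Local Notation e := (unit_e S).

Lemma starD x y : star S (x + y) = star S x + star S y.
Proof. by have := star_semilinear S 1 x y; rewrite !scale1r conjC1 scale1r. Qed.

Lemma star0 : star S 0 = 0.
Proof.
have := starD 0 0; rewrite addr0 => star00.
by apply: (addrI (star S 0)); rewrite addr0 -star00.
Qed.

Lemma starZ (a : C) x : star S (a *: x) = a^* *: star S x.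
Proof. by have := star_semilinear S a x 0; rewrite !addr0 star0 addr0. Qed.

Lemma starN x : star S (- x) = - star S x.
Proof. by rewrite -scaleN1r starZ rmorphN1 scaleN1r. Qed.

Lemma star_unitZ (t : R) : star S (t%:C *: e) = t%:C *: e.
Proof. by rewrite starZ conjC_realc unit_herm. Qed.

Lemma posD x y : pos S x -> pos S y -> pos S (x + y).
Proof. by rewrite /pos raddfD; apply: cones_add. Qed.

Lemma posZ (a : C) x : 0 <= a -> pos S x -> pos S (a *: x).
Proof.
move=> a_ge0 /(cones_scale a_ge0); congr (cones _ _ _).
by apply/matrixP => i j; rewrite !mxE.
Qed.

Lemma pos_herm x : pos S x -> star S x = x.
Proof. by move=> /cones_herm /matrixP /(_ ord0 ord0); rewrite !mxE. Qed.

Lemma pos_anti x : pos S x -> pos S (- x) -> x = 0.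
Proof.
move=> x_ge0 Nx_ge0.
have Nx_cone : cones S 1 (- const_mx x).
  by move: Nx_ge0; congr (cones _ _ _); apply/matrixP => i j; rewrite !mxE.
by have /matrixP /(_ ord0 ord0) := cones_proper x_ge0 Nx_cone; rewrite !mxE.
Qed.

Lemma herm_bounded x : star S x = x -> exists2 r : C, 0 < r & pos S (r *: e + x).
Proof.
move=> x_herm.
have x_mx_herm : mx_star (star S) (const_mx x : 'M[V]_1) = const_mx x.
  by apply/matrixP => i j; rewrite !mxE x_herm.
have [r [r_gt0 r_cone]] := unit_order x_mx_herm.
exists r => //; rewrite /pos raddfD; move: r_cone; congr (cones _ _ (_ + _)).
by apply/matrixP => i j; rewrite !mxE !ord1.
Qed.

Lemma pos0 : pos S 0.
Proof.
have [r _ r_cone] := herm_bounded star0.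
by have := posZ (lexx 0) r_cone; rewrite scale0r.
Qed.

Lemma pos_unit : pos S e.
Proof.
have [r r_gt0] := herm_bounded star0; rewrite addr0.
have rV_ge0 : 0 <= r^-1 by rewrite invr_ge0 ltW.
by move=> /(posZ rV_ge0); rewrite scalerA mulVf ?gt_eqF // scale1r.
Qed.

Lemma unit_neq0 x : x != 0 -> pos S x -> e != 0.
Proof.
move=> x_neq0 x_ge0; apply: contraNneq x_neq0 => e0; apply/eqP.
have Nx_herm : star S (- x) = - x by rewrite starN pos_herm.
have [r _] := herm_bounded Nx_herm.
by rewrite e0 scaler0 add0r => /(pos_anti x_ge0).
Qed.

Lemma pos_unitZ (t : R) : e != 0 -> pos S (t%:C *: e) -> 0 <= t.
Proof.
move=> e_neq0 te_ge0; rewrite leNgt; apply/negP => t_lt0.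
have Ninvt_ge0 : 0 <= (- t^-1)%:C by rewrite ler0c oppr_ge0 ltW // invr_lt0.
have := posZ Ninvt_ge0 te_ge0.
rewrite scalerA -rmorphM mulNr mulVf ?lt_eqF // rmorphN1 scaleN1r => Ne_ge0.
by move: e_neq0; rewrite (pos_anti pos_unit Ne_ge0) eqxx.
Qed.

Lemma pos_half x : pos S (x + x) -> pos S x.
Proof.
have half_ge0 : 0 <= (2%:R : C)^-1 by rewrite invr_ge0 ler0n.
have -> : x + x = (2%:R : C) *: x by rewrite scaler_nat mulr2n.
by move=> /(posZ half_ge0); rewrite scalerA mulVf ?scale1r // pnatr_eq0.
Qed.

(* [re_le x r] says that the real part (x + x^* )/2 of x lies below r e. *)
Definition re_le (x : V) (r : R) : Prop :=
  pos S ((r%:C *: e - x) + (r%:C *: e - star S x)).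

Lemma re_le0 : re_le 0 0.
Proof. by rewrite /re_le star0 scale0r subr0 addr0; exact: pos0. Qed.

Lemma re_leD x y r s : re_le x r -> re_le y s -> re_le (x + y) (r + s).
Proof.
move=> /posD xr /xr; congr (pos S _).
rewrite starD rmorphD scalerDl !opprD.
by rewrite addrACA; congr (_ + _); rewrite addrACA.
Qed.

Lemma re_leZ (t : R) x r : 0 < t -> re_le x r -> re_le (t%:C *: x) (t * r).
Proof.
move=> t_gt0 x_le; have t_ge0 : 0 <= t%:C by rewrite ler0c ltW.
have := posZ t_ge0 x_le; congr (pos S _).
by rewrite starZ conjC_realc scalerDr !scalerBr !scalerA -rmorphM.
Qed.

Lemma re_le_bounded x : exists r, re_le x r.
Proof.
have re_herm : star S (- (x + star S x)) = - (x + star S x).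
  by rewrite starN starD star_invol addrC.
have [r r_gt0 r_bound] := herm_bounded re_herm.
exists (complex.Re r); rewrite /re_le RRe_real ?gtr0_real //.
have := posD r_bound (posZ (ltW r_gt0) pos_unit).
by congr (pos S _); rewrite addrAC addrACA opprD.
Qed.

Lemma re_le_herm x r : star S x = x -> re_le x r <-> pos S (r%:C *: e - x).
Proof.
rewrite /re_le => ->; split; first exact: pos_half.
by move=> x_le; exact: posD.
Qed.

Lemma re_le_skew x : star S x = - x -> re_le x 0.
Proof. by rewrite /re_le => ->; rewrite scale0r !sub0r opprK addNr; exact: pos0. Qed.

Section State.
Variables (phi : V -> C) (phi_state : state S phi).

Lemma state0 : phi 0 = 0.
Proof.
have [phi_lin _] := phi_state; have := phi_lin 1 0 0.
rewrite scale1r addr0 mul1r => phi00.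
by apply: (addIr (phi 0)); rewrite add0r -phi00.
Qed.

Lemma stateD x y : phi (x + y) = phi x + phi y.
Proof.
by have [phi_lin _] := phi_state; have := phi_lin 1 x y; rewrite scale1r mul1r.
Qed.

Lemma stateZ (a : C) x : phi (a *: x) = a * phi x.
Proof.
by have [phi_lin _] := phi_state; rewrite -[_ *: x]addr0 phi_lin state0 addr0.
Qed.

Lemma stateN x : phi (- x) = - phi x.
Proof. by rewrite -scaleN1r stateZ mulN1r. Qed.

Lemma state_ge0 x : pos S x -> 0 <= phi x.
Proof. by have [_ [phi_pos _]] := phi_state; apply: phi_pos. Qed.

Lemma state_unit : phi e = 1.
Proof. by have [_ [_ ->]] := phi_state. Qed.

Lemma state_le1 x : pos S (e - x) -> phi x <= 1.
Proof. by move=> /state_ge0; rewrite stateD stateN state_unit subr_ge0. Qed.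

End State.

Lemma state_of_dominated (f : V -> R) :
  (forall (t : R) x y, f (t%:C *: x + y) = t * f x + f y) ->
  (forall x r, re_le x r -> f x <= r) -> f e = 1 ->
  exists2 phi, state S phi & forall x, star S x = x -> phi x = (f x)%:C.
Proof.
move=> f_lin f_dom f_e.
have f_herm x : star S x = x -> complexify f x = (f x)%:C.
  move=> x_herm; rewrite /complexify.
  suff -> : f ('i *: x) = 0 by rewrite mulr0 subr0.
  have ix_skew : star S ('i *: x) = - ('i *: x) by rewrite starZ conjCi x_herm scaleNr.
  have Nix_skew : star S (- ('i *: x)) = - - ('i *: x) by rewrite starN ix_skew.
  have := f_dom _ _ (re_le_skew Nix_skew); rewrite (real_linearN f_lin).
  by have := f_dom _ _ (re_le_skew ix_skew); lra.
have f_ge0 x : pos S x -> 0 <= f x.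
  move=> x_ge0; have Nx_herm : star S (- x) = - x by rewrite starN pos_herm.
  have /f_dom : re_le (- x) 0 by apply/re_le_herm; rewrite // scale0r sub0r opprK.
  by rewrite (real_linearN f_lin) oppr_le0.
exists (complexify f) => //; split; last split.
- exact: complexify_linear.
- by move=> x x_ge0; rewrite f_herm ?pos_herm // ler0c f_ge0.
- by rewrite f_herm ?unit_herm // f_e.
Qed.

Definition unit_graph : set (V * R) := range (fun t : R => (t%:C *: e, t)).

Lemma unit_sub (r t : R) x : r%:C *: e - (t%:C *: e + x) = (r - t)%:C *: e - x.
Proof. by rewrite opprD addrA -scalerBl -rmorphB. Qed.

Lemma unit_graph_dominated_linear : e != 0 -> dominated_linear_graph re_le unit_graph.
Proof.
move=> e_neq0; split.
- by exists 0; rewrite ?scale0r.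
- move=> _ _ _ _ t [t1 _ [<- <-]] [t2 _ [<- <-]].
  by exists (t * t1 + t2); rewrite // rmorphD rmorphM scalerDl scalerA.
- move=> _ _ r [t _ [<- <-]] /(re_le_herm _ (star_unitZ t)).
  rewrite -[t%:C *: e]addr0 unit_sub subr0.
  by move=> /(pos_unitZ e_neq0); rewrite subr_ge0.
Qed.

Lemma state_attaining_one p : e != 0 -> pos S p -> pos S (e - p) ->
  (forall r : R, r < 1 -> ~ pos S (r%:C *: e - p)) ->
  exists2 phi, state S phi & phi p = 1.
Proof.
move=> e_neq0 p_ge0 p_le_e p_not_below.
have p_herm := pos_herm p_ge0.
have unit_p_herm (t : R) x : star S x = x -> star S (t%:C *: e + x) = t%:C *: e + x.
  by move=> x_herm; rewrite starD star_unitZ x_herm.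
have graph_e := unit_graph_dominated_linear e_neq0.
have G_dom : dominated_linear_graph re_le (adjoin unit_graph p 1).
  apply: (adjoin_dominated_linear (@re_leZ) graph_e) => _ a r [t _ [<- <-]].
    move=> /(re_le_herm _ (unit_p_herm t p p_herm)); rewrite unit_sub => r_bound.
    rewrite -lerBrDl leNgt; apply/negP => /p_not_below; exact.
  have Np_herm : star S (- p) = - p by rewrite starN p_herm.
  move=> /(re_le_herm _ (unit_p_herm t _ Np_herm)); rewrite unit_sub opprK.
  move=> /(posD p_le_e); rewrite addrC addrACA subrr addr0.
  have -> : (r - t)%:C *: e + e = (r - t + 1)%:C *: e.
    by rewrite [in RHS]rmorphD rmorph1 scalerDl scale1r.
  by move=> /(pos_unitZ e_neq0); lra.
have [f [f_graph f_lin f_dom]] := dominated_extension (@re_leZ) re_le0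
  (@re_leD) re_le_bounded G_dom.
have f_e : f e = 1.
  by apply: f_graph; apply: sub_adjoin; exists 1; rewrite ?scale1r.
have [phi phi_state phi_f] := state_of_dominated f_lin f_dom f_e.
have f_p : f p = 1 by apply: f_graph; apply: adjoin_self; exists 0; rewrite ?scale0r.
by exists phi; rewrite // phi_f // f_p.
Qed.

Section PeakNegligible.
Variables (p : V) (p_ge0 : pos S p) (p_le_e : pos S (e - p)).

Definition peak_negligible (x : V) : Prop :=
  forall eps : C, 0 < eps -> exists2 T : C, 0 <= T &
    forall phi, state S phi -> `|phi x| <= eps + T * (1 - phi p).

Lemma state_in_unit_interval phi : state S phi ->
  exists s : R, [/\ phi p = s%:C, 0 <= s & s <= 1].
Proof.
move=> phi_state; have p_val_ge0 := state_ge0 phi_state p_ge0.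
have p_val_le1 := state_le1 phi_state p_le_e.
have p_val_real : phi p = (complex.Re (phi p))%:C by rewrite RRe_real ?ger0_real.
exists (complex.Re (phi p)); split => //; first by rewrite -ler0c -p_val_real.
by rewrite -lecR -p_val_real.
Qed.

Lemma peak_negligible0 : peak_negligible 0.
Proof.
move=> eps eps_gt0; exists 0 => // phi phi_state.
by rewrite state0 // normr0 mul0r addr0 ltW.
Qed.

Lemma peak_negligibleD x y :
  peak_negligible x -> peak_negligible y -> peak_negligible (x + y).
Proof.
move=> x_negl y_negl eps eps_gt0.
have eps2_gt0 : 0 < eps / 2%:R by rewrite divr_gt0 ?ltr0n.
have [Tx Tx_ge0 Tx_bound] := x_negl _ eps2_gt0.
have [Ty Ty_ge0 Ty_bound] := y_negl _ eps2_gt0.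
exists (Tx + Ty) => [|phi phi_state]; first exact: addr_ge0.
rewrite stateD // (splitr eps) mulrDl addrACA.
exact: le_trans (ler_normD _ _) (lerD (Tx_bound _ phi_state) (Ty_bound _ phi_state)).
Qed.

Lemma peak_negligibleZ (a : C) x : peak_negligible x -> peak_negligible (a *: x).
Proof.
move=> x_negl eps eps_gt0.
have a1_gt0 : 0 < `|a| + 1 by rewrite ltr_wpDl.
have [T T_ge0 T_bound] := x_negl _ (divr_gt0 eps_gt0 a1_gt0).
exists (`|a| * T) => [|phi phi_state]; first by rewrite mulr_ge0.
rewrite stateZ // normrM.
apply: le_trans (ler_wpM2l (normr_ge0 a) (T_bound _ phi_state)) _.
rewrite mulrDr -[in X in _ <= X]mulrA lerD2r mulrCA.
apply: ler_piMr; first exact: ltW.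
by rewrite ler_pdivrMr // mul1r lerDl.
Qed.

Lemma Cp_peak_negligible v : Cp S p v -> Cp S p (- v) -> peak_negligible v.
Proof.
move=> [_ v_Cp] [_ Nv_Cp] eps eps_gt0.
have eps2_gt0 : 0 < eps / 2%:R by rewrite divr_gt0 ?ltr0n.
have [t1 [t1_gt0 v_pos]] := v_Cp _ eps2_gt0.
have [t2 [t2_gt0 Nv_pos]] := Nv_Cp _ eps2_gt0.
exists (t1 + t2) => [|phi phi_state]; first by rewrite addr_ge0 ?ltW.
have [s [p_val s_ge0 s_le1]] := state_in_unit_interval phi_state; rewrite p_val.
have s_le1C : s%:C <= 1 by rewrite -(rmorph1 (real_complex R)) lecR.
have gap_ge0 : 0 <= 1 - s%:C by rewrite subr_ge0.
have state_val w t : pos S (w + eps / 2%:R *: p + t *: (e - p)) ->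
    0 <= phi w + (eps / 2%:R * s%:C + t * (1 - s%:C)).
  move=> /(state_ge0 phi_state); rewrite !stateD // !stateZ // stateD // stateN //.
  by rewrite state_unit // p_val addrA.
have bound_ge0 t : 0 < t -> 0 <= eps / 2%:R * s%:C + t * (1 - s%:C).
  move=> t_gt0; apply: addr_ge0; apply: mulr_ge0 => //; last exact: ltW.
    exact: ltW.
  by rewrite ler0c.
have := state_val _ _ Nv_pos; rewrite stateN // => Nv_bound.
apply: le_trans (ler_norm_sandwich (state_val _ _ v_pos) Nv_bound
  (bound_ge0 _ t1_gt0) (bound_ge0 _ t2_gt0)) _.
rewrite addrACA -(mulrDl t1) lerD2r [X in _ <= X](splitr eps).
by apply: lerD; apply: ler_piMr => //; exact: ltW.
Qed.

Lemma Jp_peak_negligible x : Jp S p x -> peak_negligible x.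
Proof.
move=> [n [a [v [v_Cp ->]]]].
apply: (big_ind peak_negligible); [exact: peak_negligible0 | exact: peak_negligibleD |].
move=> i _; apply: peak_negligibleZ.
by have [v_Cp' Nv_Cp'] := v_Cp i; exact: Cp_peak_negligible.
Qed.

Lemma peak_negligible_alpha_m : peak_negligible p -> alpha_m S p != 1.
Proof.
move=> p_negl; apply/eqP => alpha1.
have half_gt0 : 0 < (2^-1 : R)%:C by rewrite ltcR invr_gt0 ltr0n.
have [T T_ge0 T_bound] := p_negl _ half_gt0.
have T_real : T = (complex.Re T)%:C by rewrite RRe_real ?ger0_real.
set tau := complex.Re T in T_real; have tau_ge0 : 0 <= tau by rewrite -ler0c -T_real.
set E := [set complex.Re `|phi p| | phi in state S].
have E_sup : has_sup E.
  apply: contrapT => /sup_out E0.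
  by move: alpha1; rewrite /alpha_m -/E E0 => /eqP; rewrite eq_sym oner_eq0.
pose delta := (2 * (tau + 1))^-1.
have delta_gt0 : 0 < delta by rewrite invr_gt0 mulr_gt0 // ltr_wpDl.
have delta_def : delta * (2 * (tau + 1)) = 1.
  by rewrite mulVf // gt_eqF // mulr_gt0 // ltr_wpDl.
have [_ [phi phi_state <-]] := sup_adherent delta_gt0 E_sup.
have [s [p_val s_ge0 s_le1]] := state_in_unit_interval phi_state.
rewrite -/(alpha_m S p) alpha1 p_val ger0_norm ?ler0c //= => s_near1.
have := T_bound _ phi_state; rewrite p_val T_real ger0_norm ?ler0c // => s_boundC.
have s_bound : s <= 2^-1 + tau * (1 - s).
  by rewrite -lecR rmorphD rmorphM rmorphB rmorph1.
(* s <= 1/2 + tau (1 - s) <= 1/2 + tau delta = 1 - delta < s *)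
nra.
Qed.

End PeakNegligible.

Lemma Cp_self p : pos S p -> Cp S p p.
Proof.
move=> p_ge0; split=> [|eps eps_gt0]; first exact: pos_herm.
exists 1; split => //; rewrite scale1r addrAC [p + _]addrC subrK addrC.
exact: posD (posZ (ltW eps_gt0) p_ge0) pos_unit.
Qed.

Lemma Cp_opp_self p (r : R) : r < 1 -> pos S p -> pos S (e - p) ->
  pos S (r%:C *: e - p) -> Cp S p (- p).
Proof.
move=> r_lt1 p_ge0 p_le_e p_le_re.
split=> [|eps eps_gt0]; first by rewrite starN pos_herm.
pose t := (1 - r)^-1.
have t_gt0 : 0 < t by rewrite invr_gt0 subr_gt0.
have tr : t * r = t - 1 by rewrite /t; field; rewrite subr_eq0 gt_eqF.
exists t%:C; split; first by rewrite ltcR.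
have -> : - p + eps *: p + t%:C *: (e - p) =
    t%:C *: (r%:C *: e - p) + (e - p) + eps *: p.
  rewrite !scalerBr scalerA -rmorphM tr rmorphB rmorph1 scalerBl scale1r.
  rewrite [LHS]addrAC; congr (_ + _).
  by rewrite [t%:C *: e - e - _]addrAC [in RHS]addrA subrK addrC.
have t_ge0 : 0 <= t%:C by rewrite ler0c ltW.
by apply: posD (posZ (ltW eps_gt0) p_ge0); apply: posD p_le_e; apply: posZ.
Qed.

Lemma subset_span (A : set V) : A `<=` Defs.span A.
Proof.
move=> x Ax; exists 1, (fun=> 1), (fun=> x); split=> //.
by rewrite big_ord1 scale1r.
Qed.

Lemma Jp_of_below p (r : R) : r < 1 -> pos S p -> pos S (e - p) ->
  pos S (r%:C *: e - p) -> Jp S p p.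
Proof.
move=> r_lt1 p_ge0 p_le_e p_le_re; apply: subset_span; split.
  exact: Cp_self.
exact: Cp_opp_self r_lt1 p_ge0 p_le_e p_le_re.
Qed.

Lemma alpha_m_eq1 p : pos S p -> pos S (e - p) ->
  (exists2 phi, state S phi & phi p = 1) -> alpha_m S p = 1.
Proof.
move=> p_ge0 p_le_e [phi phi_state phi_p].
have alpha_ub : ubound [set complex.Re `|psi p| | psi in state S] 1.
  move=> _ [psi psi_state <-].
  have [s [-> s_ge0 s_le1]] := state_in_unit_interval p_ge0 p_le_e psi_state.
  by rewrite ger0_norm ?ler0c.
apply/le_anti/andP; split.
  by apply: ge_sup alpha_ub; exists (complex.Re `|phi p|), phi.
by apply: ub_le_sup; [exists 1 | exists phi; rewrite // phi_p normr1].
Qed.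

End OperatorSystem.

Theorem proposition4p8 (R : realType) (V : lmodType R[i]) (S : opsys R V)
  (p : V) :
  p != 0 -> pos S p -> pos S (unit_e S - p) ->
  (alpha_m S p = 1 <-> ~ Jp S p p).
Proof.
move=> p_neq0 p_ge0 p_le_e; split=> [alpha1 p_Jp | p_notJ].
  have := peak_negligible_alpha_m p_ge0 p_le_e (Jp_peak_negligible p_ge0 p_le_e p_Jp).
  by rewrite alpha1 eqxx.
apply: alpha_m_eq1 => //; apply: state_attaining_one => //.
  exact: unit_neq0 p_neq0 p_ge0.
by move=> r r_lt1 /(Jp_of_below r_lt1 p_ge0 p_le_e).
Qed.
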